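(* Let $\mathbb{A}$ be a non-empty set. A word $x\in\mathbb{A}^\omega$ is ultimately periodic if and only if for every finite coloring $\varphi:\mathbb{A}^+\to C$ there exists a suffix of $x$ which admits a shift invariant $\varphi$-monochromatic factorization.
   Context: $x$ is ultimately periodic if $x=uv^\omega$ for some finite words $u$ and non-empty $v$. $T$ is the shift, $T(x_0x_1\cdots)=x_1x_2\cdots$. A factorization $z=V_0V_1V_2\cdots$ with all $V_i\in\mathbb{A}^+$ is $\varphi$-monochromatic if there is $c\in C$ with $\varphi(V_i)=c$ for all $i$. It is shift invariant if for every positive integer $j$, the induced factorization $T^j(z)=W_0W_1W_2\cdots$ with $|W_i|=|V_i|$ for all $i$ is also $\varphi$-monochromatic (the color may depend on $j$). *)

From mathcomp Require Import all_boot.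
Set Implicit Arguments. Unset Strict Implicit. Unset Printing Implicit Defensive.

(* The infinite word u v^omega, where v = a :: w is non-empty. *)
Definition omega_word (A : Type) (u : seq A) (a : A) (w : seq A) : nat -> A :=
  fun n => if n < size u then nth a u n
           else nth a (a :: w) ((n - size u) %% (size w).+1).

Definition ultimately_periodic (A : Type) (x : nat -> A) : Prop :=
  exists (u : seq A) (a : A) (w : seq A), forall n, x n = omega_word u a w n.

Definition shift (A : Type) (j : nat) (z : nat -> A) : nat -> A :=
  fun n => z (j + n).

(* A factorization z = V_0 V_1 V_2 ... is encoded by the lengths l i = |V_i|. *)
Definition fstart (l : nat -> nat) (i : nat) : nat := \sum_(j < i) l j.

Definition factor (A : Type) (z : nat -> A) (l : nat -> nat) (i : nat) : seq A :=
  mkseq (fun k => z (fstart l i + k)) (l i).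

Definition valid_lengths (l : nat -> nat) : Prop := forall i, 0 < l i.

Definition monochromatic (A : Type) (C : Type) (phi : seq A -> C)
  (z : nat -> A) (l : nat -> nat) : Prop :=
  exists c : C, forall i, phi (factor z l i) = c.

Definition shift_invariant_monochromatic (A : Type) (C : Type)
  (phi : seq A -> C) (z : nat -> A) (l : nat -> nat) : Prop :=
  valid_lengths l /\ monochromatic phi z l /\
  (forall j, 0 < j -> monochromatic phi (shift j z) l).

From mathcomp Require Import all_boot boolp zify.
Set Implicit Arguments.
Unset Strict Implicit.
Unset Printing Implicit Defensive.

(* If x = u v^omega, cutting the suffix v^omega (and each of its shifts) into
   blocks of length |v| yields factorizations whose factors all coincide.
   Conversely, colour each factor by a colour of its first letter: a
   shift-invariant monochromatic factorization whose first factor has length p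
   makes that letter colouring of x eventually p-periodic. If x uses finitely
   many letters, colour them injectively. Otherwise colour the letters in order
   of first occurrence n, each with the opposite colour of the letter lag(n)
   positions earlier; since lag takes every positive value at arbitrarily late
   first occurrences, no period survives. *)

Definition periodic (T : Type) (z : nat -> T) (p : nat) : Prop :=
  forall n, z (n + p) = z n.

Section Periodicity.
Variable A : Type.

Lemma periodic_shift (z : nat -> A) p j :
  periodic z p -> periodic (shift j z) p.
Proof. by move=> hz n; rewrite /shift addnA hz. Qed.

Lemma periodic_mod (z : nat -> A) p n : periodic z p -> z n = z (n %% p).
Proof.
move=> hz; rewrite {1}(divn_eq n p) addnC.
by elim: (n %/ p) => [|d IH]; rewrite ?mul0n ?addn0 // mulSn addnCA addnC hz.
Qed.

Lemma ultimately_periodicP (x : nat -> A) :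
  ultimately_periodic x <-> exists k p, 0 < p /\ periodic (shift k x) p.
Proof.
split=> [[u [a [w hx]]] | [k [p [p0 hp]]]].
  exists (size u), (size w).+1; split=> // n; rewrite /shift !hx /omega_word.
  by rewrite !ltnNge !leq_addr /= !addKn modnDr.
exists (mkseq x k), (x k), (mkseq (fun i => x (k + i.+1)) p.-1) => n.
rewrite /omega_word !size_mkseq prednK //.
case: ltnP => hn; first by rewrite nth_mkseq.
have := ltn_mod (n - k) p; rewrite p0.
have := periodic_mod (n - k) hp; rewrite /shift subnKC // => ->.
case: ((n - k) %% p) => [|r] /= hr; first by rewrite addn0.
by rewrite nth_mkseq // -ltnS prednK.
Qed.

Lemma periodic_monochromatic (C : Type) (phi : seq A -> C) z p :
  periodic z p -> monochromatic phi z (fun _ => p).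
Proof.
have fstart_const i : fstart (fun _ => p) i = i * p.
  by rewrite /fstart big_const_ord iter_addn_0 mulnC.
move=> hz; exists (phi (factor z (fun _ => p) 0)) => i.
congr phi; apply: eq_mkseq => t; rewrite !fstart_const mul0n.
by elim: i => [|i IH] //; rewrite mulSn -addnA addnC hz.
Qed.

Lemma shift_invariant_monochromatic_periodic (C : Type) (phi : seq A -> C)
    z p :
  0 < p -> periodic z p -> shift_invariant_monochromatic phi z (fun _ => p).
Proof.
move=> p0 hz; split=> //; split; first exact: periodic_monochromatic.
by move=> j _; exact/periodic_monochromatic/periodic_shift.
Qed.

Lemma periodic_color_inj (C : Type) (g : A -> C) (z : nat -> A) p :
  (forall m m', g (z m) = g (z m') -> z m = z m') ->
  periodic (g \o z) p -> periodic z p.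
Proof. by move=> ginj hp n; apply: ginj; exact: hp. Qed.

Lemma first_letter_periodic (C : Type) (g : A -> C) a0 z l :
  shift_invariant_monochromatic (g \o head a0) z l -> periodic (g \o z) (l 0).
Proof.
move=> [hl [hm hs]] j.
have {hm hs} [c hc] : monochromatic (g \o head a0) (shift j z) l.
  by case: j => [|j]; [case: hm => c hc; exists c | exact: hs].
have head_factor i : head a0 (factor (shift j z) l i) = z (j + fstart l i).
  rewrite /factor; move: (hl i).
  by case: (l i) => //= n _; rewrite /shift addn0.
move: (hc 0) (hc 1); rewrite /= !head_factor /fstart big_ord0 big_ord1 addn0.
by move=> <- <-.
Qed.

End Periodicity.

Section Letters.
Variables (A : Type) (x : nat -> A).

Definition first_pos (a : A) : nat :=
  if pselect (exists m, `[< x m = a >]) is left ex then ex_minn ex else 0.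

Lemma first_posP m :
  x (first_pos (x m)) = x m /\ forall i, x i = x m -> first_pos (x m) <= i.
Proof.
rewrite /first_pos; case: pselect => [ex | []]; last by exists m; exact/asboolP.
case: ex_minnP => n /asboolP -> hmin; split=> // i hi.
by apply: hmin; exact/asboolP.
Qed.

Lemma x_first_pos m : x (first_pos (x m)) = x m.
Proof. by case: (first_posP m). Qed.

Lemma first_pos_le m : first_pos (x m) <= m.
Proof. by case: (first_posP m) => _; apply. Qed.

Lemma first_pos_inj m m' : first_pos (x m) = first_pos (x m') -> x m = x m'.
Proof. by move=> e; rewrite -x_first_pos e x_first_pos. Qed.

Definition fresh (n : nat) : bool := first_pos (x n) == n.

Lemma fresh_first_pos m : fresh (first_pos (x m)).
Proof. by rewrite /fresh x_first_pos. Qed.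

Lemma bounded_or_fresh_unbounded :
  (exists N, forall m, first_pos (x m) <= N) \/
  (forall N, exists2 n, N <= n & fresh n).
Proof.
have [|unbounded] := pselect (exists N, forall m, first_pos (x m) <= N).
  by left.
right=> N; have /existsNP [m hm] : ~ forall m, first_pos (x m) <= N.
  by move=> hN; apply: unbounded; exists N.
by exists (first_pos (x m)); [lia | exact: fresh_first_pos].
Qed.

Definition nletters (n : nat) : nat := count fresh (iota 0 n).

Lemma nlettersS n : nletters n.+1 = nletters n + fresh n.
Proof. by rewrite /nletters -addn1 iotaD count_cat /= addn0. Qed.

Lemma nletters_le n : nletters n <= n.
Proof. by rewrite /nletters -{2}(size_iota 0 n) count_size. Qed.

Lemma leq_nletters m n : m <= n -> nletters m <= nletters n.
Proof. by move/subnKC <-; rewrite /nletters iotaD count_cat leq_addr. Qed.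

Definition lag (n : nat) : nat := (logn 2 (nletters n)).+1.

Lemma first_pos_sub_lag_lt n : 0 < n -> first_pos (x (n - lag n)) < n.
Proof. by move=> n0; have := first_pos_le (n - lag n); rewrite /lag; lia. Qed.

(* The recursion is on [first_pos (x (n - lag n)) < n], so fuel [n.+1] is
   enough. *)
Fixpoint alt_color_fuel (f n : nat) : bool :=
  if f is f.+1 then (0 < n) && ~~ alt_color_fuel f (first_pos (x (n - lag n)))
  else false.

Definition alt_color (n : nat) : bool := alt_color_fuel n.+1 n.

Lemma alt_color_fuel_stable f f' n :
  n < f -> n < f' -> alt_color_fuel f n = alt_color_fuel f' n.
Proof.
elim: f f' n => [|f IH] [|f'] n //= hn hn'.
case: (posnP n) => // n0; have lt_n := first_pos_sub_lag_lt n0.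
by rewrite (IH f') ?(leq_trans lt_n).
Qed.

Lemma alt_colorE n :
  0 < n -> alt_color n = ~~ alt_color (first_pos (x (n - lag n))).
Proof.
move=> n0; rewrite {1}/alt_color /= n0; congr negb.
exact: alt_color_fuel_stable (first_pos_sub_lag_lt n0) _.
Qed.

Lemma bounded_first_pos_color_inj N :
  (forall m, first_pos (x m) <= N) ->
  forall m m', (inord (first_pos (x m)) : 'I_N.+1) = inord (first_pos (x m')) ->
  x m = x m'.
Proof.
move=> hN m m' /(congr1 val); rewrite /= !inordK ?ltnS //.
exact: first_pos_inj.
Qed.

Definition letter_color (a : A) : bool := alt_color (first_pos a).

Section FreshUnbounded.
Hypothesis fresh_unbounded : forall N, exists2 n, N <= n & fresh n.

Lemma nletters_hit r : exists2 n, fresh n & nletters n = r.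
Proof.
have ex : exists n, r < nletters n.+1.
  elim: r => [|r [n hn]].
    by exists 0; rewrite nlettersS /fresh -leqn0 first_pos_le.
  have [m hm hfm] := fresh_unbounded n.+1.
  exists m; rewrite nlettersS hfm addn1 ltnS.
  exact: leq_trans hn (leq_nletters hm).
case: (ex_minnP ex) => n hn hmin.
have hle : nletters n <= r.
  case: n hn hmin => [|n] hn hmin; first by rewrite /nletters.
  by rewrite leqNgt; apply/negP => /hmin; rewrite ltnn.
move: hn; rewrite nlettersS; case hfn: (fresh n) => /=; last by lia.
by exists n => //; lia.
Qed.

Lemma lag_hit p k : 0 < p -> exists n, [/\ fresh n, lag n = p & k + p <= n].
Proof.
move=> p0; set r := 2 ^ p.-1 * (2 * (k + p)).+1.
have logr : logn 2 r = p.-1.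
  rewrite lognM ?expn_gt0 // pfactorK // logn_coprime ?addn0 //.
  by rewrite coprime2n /= oddM.
have [n hfn hn] := nletters_hit r.
exists n; split=> //; first by rewrite /lag hn logr prednK.
have := nletters_le n; rewrite hn; have : (2 * (k + p)).+1 <= r.
  by rewrite leq_pmull // expn_gt0.
lia.
Qed.

Lemma letter_color_aperiodic k p :
  0 < p -> ~ periodic (letter_color \o shift k x) p.
Proof.
move=> p0 hp; have [n [hfn lagn hn]] := lag_hit k p0.
have := hp (n - p - k); rewrite /= /shift.
have -> : k + (n - p - k + p) = n by lia.
have -> : k + (n - p - k) = n - p by lia.
have n0 : 0 < n by apply: leq_trans hn; rewrite addn_gt0 p0 orbT.
by rewrite /letter_color (eqP hfn) (alt_colorE n0) lagn; case: alt_color.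
Qed.

End FreshUnbounded.
End Letters.

Theorem proposition3p3 (A : Type) (a0 : A) (x : nat -> A) :
  ultimately_periodic x <->
  (forall (C : finType) (phi : seq A -> C),
     exists (k : nat) (l : nat -> nat),
       shift_invariant_monochromatic phi (shift k x) l).
Proof.
split=> [/ultimately_periodicP [k [p [p0 hp]]] C phi | hcol].
  by exists k, (fun _ => p); exact: shift_invariant_monochromatic_periodic.
have [[N hN] | fresh_unbounded] := bounded_or_fresh_unbounded x.
  pose g a : 'I_N.+1 := inord (first_pos x a).
  have [k [l hkl]] := hcol _ (g \o head a0).
  apply/ultimately_periodicP; exists k, (l 0); split; first exact: hkl.1.
  apply: periodic_color_inj (first_letter_periodic hkl) => m m'.
  exact: bounded_first_pos_color_inj hN (k + m) (k + m').
have [k [l hkl]] := hcol _ (letter_color x \o head a0).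
exfalso; apply: (letter_color_aperiodic fresh_unbounded (hkl.1 0)).
exact: first_letter_periodic hkl.
Qed.
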